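(* Let $(\mathcal A,\mathbb E)$ be a $B$-valued probability space and $a,b\in\mathcal A$ free. If $\tau\in Y^{be}_{2n}$ and $\sigma\in Y^{bo}_{2n+1}$ ($n\ge0$), then for all $x_1,y_1,\dots,x_n,y_n,x_{n+1}\in B$, $$\kappa_\tau(x_1a,y_1b,\dots,x_na,y_nb)=(k^a\cup k^b)_\tau(x_1,y_1,\dots,x_n,y_n),$$ $$\kappa_\sigma(x_1a,y_1b,\dots,x_na,y_nb,x_{n+1}a)=(k^b\cup k^a)_\sigma(x_1,y_1,\dots,x_n,y_n,x_{n+1}).$$
   Context: $B$ is a unital algebra over a field $\mathbb K$ of characteristic zero. $B$-valued probability space $(\mathcal A,\mathbb E)$: $\mathcal A$ a unital $\mathbb K$-algebra and $B$-bimodule with all mixed triple products associative; $\mathbb E:\mathcal A\to B$ linear, unital, $\mathbb E(xay)=x\mathbb E(a)y$. Freeness of $a,b$: for the $B$-subalgebras $\mathcal A_1,\mathcal A_2$ they generate, $\mathbb E(a_1\cdots a_n)=0$ whenever $n\ge1$, each $\mathbb E(a_i)=0$, $a_i\in\mathcal A_{j_i}$, $j_i\neq j_{i+1}$. Planar binary trees: $Y_0=\{|\}$, $Y_n=\{\sigma\vee\tau:|\sigma|+|\tau|=n-1\}$ ($\sigma\vee\tau$: root with left subtree $\sigma$, right subtree $\tau$). Each $\tau\in Y_n$, $n\ge1$, is uniquely $\tau_1\vee(\tau_2\vee(\cdots\vee(\tau_k\vee|)))$; $j_i=|\tau_1|+\dots+|\tau_i|+i$. $Y^{be}=\{|\}\cup\{\sigma\vee\rho:\sigma\in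 Y^{bo},\rho\in Y^{be}\}$ and $Y^{bo}=\{\sigma\vee\rho:\sigma,\rho\in Y^{be}\}$ (joint recursive definition); subscripts indicate the number of vertices. Cumulants: multilinear $\kappa_n:\mathcal A^n\to B$ defined by $\mathbb E(a_1\cdots a_n)=\sum_{\tau\in Y_n}\kappa_\tau(a_1,\dots,a_n)$, $\kappa_|=1$, $\kappa_\tau(a_1,\dots,a_n)=\kappa_k(\kappa_{\tau_1}(a_1,\dots,a_{j_1-1})a_{j_1},\dots,\kappa_{\tau_k}(a_{j_{k-1}+1},\dots,a_{j_k-1})a_{j_k})$. For $c\in\mathcal A$: $k^c_0=0$, $k^c_n(x_1,\dots,x_n)=\kappa_n(x_1c,\dots,x_nc)$. For sequences $f,g$ of multilinear maps $B^n\to B$: $(f\cup g)_|=1$, $(f\cup g)_\tau(x_1,\dots,x_n)=g_k((g\cup f)_{\tau_1}(x_1,\dots,x_{j_1-1})x_{j_1},\dots,(g\cup f)_{\tau_k}(x_{j_{k-1}+1},\dots,x_{j_k-1})x_{j_k})$. *)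

From HB Require Import structures.
From mathcomp Require Import all_boot all_order all_algebra.
Set Implicit Arguments. Unset Strict Implicit. Unset Printing Implicit Defensive.
Import GRing.Theory.
Local Open Scope ring_scope.

Section BProb.
Variables (K : fieldType) (B A : algType K).
Variables (lmul : B -> A -> A) (rmul : A -> B -> A) (E : A -> B).

Record BProbSpace : Prop := {
  lmulDl : forall x y u, lmul (x + y) u = lmul x u + lmul y u;
  lmulDr : forall x u v, lmul x (u + v) = lmul x u + lmul x v;
  lmulZl : forall k x u, lmul (k *: x) u = k *: lmul x u;
  lmulZr : forall k x u, lmul x (k *: u) = k *: lmul x u;
  lmul1  : forall u, lmul 1 u = u;
  lmulA  : forall x y u, lmul (x * y) u = lmul x (lmul y u);
  rmulDl : forall u v x, rmul (u + v) x = rmul u x + rmul v x;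
  rmulDr : forall u x y, rmul u (x + y) = rmul u x + rmul u y;
  rmulZl : forall k u x, rmul (k *: u) x = k *: rmul u x;
  rmulZr : forall k u x, rmul u (k *: x) = k *: rmul u x;
  rmul1  : forall u, rmul u 1 = u;
  rmulA  : forall u x y, rmul u (x * y) = rmul (rmul u x) y;
  lrmulA : forall x u y, rmul (lmul x u) y = lmul x (rmul u y);
  mix_BAA : forall x u v, lmul x u * v = lmul x (u * v);
  mix_ABA : forall u x v, rmul u x * v = u * lmul x v;
  mix_AAB : forall u v x, rmul (u * v) x = u * rmul v x;
  E_linear : forall k u v, E (k *: u + v) = k *: E u + E v;
  E_unital : E 1 = 1;
  E_bimod  : forall x u y, E (lmul x (rmul u y)) = x * E u * y
}.

Inductive Bgen (c : A) : A -> Prop :=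
  | Bgen_gen : Bgen c c
  | Bgen_one : Bgen c 1
  | Bgen_add u v : Bgen c u -> Bgen c v -> Bgen c (u + v)
  | Bgen_scale k u : Bgen c u -> Bgen c (k *: u)
  | Bgen_mul u v : Bgen c u -> Bgen c v -> Bgen c (u * v)
  | Bgen_lmul x u : Bgen c u -> Bgen c (lmul x u)
  | Bgen_rmul u x : Bgen c u -> Bgen c (rmul u x).

Definition Bfree (a b : A) : Prop :=
  forall (n : nat) (u : nat -> A) (j : nat -> bool),
    (0 < n)%N ->
    (forall i, (i < n)%N -> Bgen (if j i then b else a) (u i) /\ E (u i) = 0) ->
    (forall i, (i.+1 < n)%N -> j i != j i.+1) ->
    E (\prod_(i < n) u i) = 0.
End BProb.

Inductive tree : Type := Leaf : tree | Node : tree -> tree -> tree.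

Fixpoint tverts (t : tree) : nat :=
  match t with Leaf => 0%N | Node l r => (tverts l + tverts r).+1 end.

Fixpoint trees_h (h : nat) : seq tree :=
  match h with
  | 0%N => [:: Leaf]
  | h'.+1 => Leaf :: [seq Node l r | l <- trees_h h', r <- trees_h h']
  end.

(* Y_n : the trees with n vertices (such a tree has height <= n) *)
Definition Y (n : nat) : seq tree := [seq t <- trees_h n | tverts t == n].

Fixpoint is_be (t : tree) : bool :=
  match t with Leaf => true | Node l r => is_bo l && is_be r end
with is_bo (t : tree) : bool :=
  match t with Leaf => false | Node l r => is_be l && is_be r end.

(* Writing t = t_1 v (t_2 v (... v (t_k v |))), the right spine is unfolded
   by [kargs]; the block of t_i consists of |t_i| arguments followed by
   a_{j_i}. kap s stands for kappa_{size s}(s). *)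
Section KappaTree.
Variables (K : fieldType) (B A : algType K) (lmul : B -> A -> A).
Variable kap : seq A -> B.

Fixpoint kappa_tree (t : tree) (s : seq A) : B :=
  match t with
  | Leaf => 1
  | Node l r =>
      kap (lmul (kappa_tree l (take (tverts l) s)) (nth 0 s (tverts l))
            :: kargs r (drop (tverts l).+1 s))
  end
with kargs (t : tree) (s : seq A) : seq A :=
  match t with
  | Leaf => [::]
  | Node l r =>
      lmul (kappa_tree l (take (tverts l) s)) (nth 0 s (tverts l))
        :: kargs r (drop (tverts l).+1 s)
  end.

(* kap is the family of cumulants: moment-cumulant formula for every n *)
Definition cumulants (E : A -> B) : Prop :=
  forall s : seq A, E (\prod_(u <- s) u) = \sum_(t <- Y (size s)) kappa_tree t s.

(* k^c_n(x_1,...,x_n) = kappa_n(x_1 c, ..., x_n c), k^c_0 = 0 *)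
Definition kc (c : A) (s : seq B) : B :=
  if s is [::] then 0 else kap [seq lmul x c | x <- s].
End KappaTree.

Section Cup.
Variables (K : fieldType) (B : algType K).

Fixpoint cup (f g : seq B -> B) (t : tree) (s : seq B) : B :=
  match t with
  | Leaf => 1
  | Node l r =>
      g (cup g f l (take (tverts l) s) * nth 0 s (tverts l)
           :: cargs f g r (drop (tverts l).+1 s))
  end
with cargs (f g : seq B -> B) (t : tree) (s : seq B) : seq B :=
  match t with
  | Leaf => [::]
  | Node l r =>
      cup g f l (take (tverts l) s) * nth 0 s (tverts l)
        :: cargs f g r (drop (tverts l).+1 s)
  end.
End Cup.

Definition alt (K : fieldType) (B A : algType K) (lmul : B -> A -> A)
  (a b : A) (z : nat -> B) (m : nat) : seq A :=
  [seq lmul (z i) (if odd i then b else a) | i <- iota 0 m].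

(* Only the associativity x (y u) = (x y) u of the left B-action is needed.  Both sides unfold
   along the right spine of the tree.  For tau in Y^{be} every left subtree on
   the spine lies in Y^{bo}, so it has an odd number of vertices: each block
   ends with an argument y_i b, the spine keeps its a/b phase, and the outer
   cumulant is k^b.  For sigma in Y^{bo} the left subtrees lie in Y^{be}, each
   block ends with x_i a and the phase flips after the first block, which is
   what the swap f <-> g in the recursion of f cup g records. *)
From HB Require Import structures.
From mathcomp Require Import all_boot all_order all_algebra.
Set Implicit Arguments. Unset Strict Implicit.

Local Open Scope ring_scope.

Lemma take_mkseq (T : Type) (f : nat -> T) k n : (k <= n)%N ->
  take k (mkseq f n) = mkseq f k.
Proof. by move=> le_kn; rewrite /mkseq -map_take take_iota (minn_idPl le_kn). Qed.

Lemma drop_mkseq (T : Type) (f : nat -> T) k n :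
  drop k (mkseq f n) = mkseq (fun i => f (k + i)%N) (n - k)%N.
Proof.
by rewrite /mkseq -map_drop drop_iota add0n -[X in iota X _]addn0 iotaDl -map_comp.
Qed.

Lemma tverts_parity (t : tree) :
  (is_be t -> ~~ odd (tverts t)) /\ (is_bo t -> odd (tverts t)).
Proof.
elim: t => [|l [IHl_be IHl_bo] r [IHr_be _]] //=.
split=> /andP[l_sort /IHr_be r_even]; rewrite oddD (negbTE r_even) addbF.
- by rewrite negbK IHl_bo.
- exact: IHl_be.
Qed.

Lemma tverts_node_left l r : (tverts l < tverts (Node l r))%N.
Proof. by rewrite ltnS leq_addr. Qed.

Section AlternatingArguments.
Variables (K : fieldType) (B A : algType K) (lmul : B -> A -> A).
Variable kappa : seq A -> B.
Hypothesis lmul_assoc : forall x y u, lmul (x * y) u = lmul x (lmul y u).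

Local Notation kt := (kappa_tree lmul kappa).
Local Notation ka := (kargs lmul kappa).
Local Notation k c := (kc lmul kappa c).

Lemma alt_mkseq c d z n :
  alt lmul c d z n = mkseq (fun i => lmul (z i) (if odd i then d else c)) n.
Proof. by []. Qed.

Lemma drop_alt c d z m n :
  drop m (alt lmul c d z n)
  = (if odd m then alt lmul d c else alt lmul c d) (fun i => z (m + i)%N) (n - m)%N.
Proof.
rewrite alt_mkseq drop_mkseq; case: ifP => m_odd; apply: eq_mkseq => i;
by rewrite oddD m_odd; case: (odd i).
Qed.

Lemma kargs_node l r s :
  ka (Node l r) s
  = lmul (kt l (take (tverts l) s)) (nth 0 s (tverts l))
    :: ka r (drop (tverts l).+1 s).
Proof. by []. Qed.

Lemma kargs_node_alt l r c d z :
  ka (Node l r) (alt lmul c d z (tverts (Node l r)))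
  = lmul (kt l (alt lmul c d z (tverts l)))
         (lmul (z (tverts l)) (if odd (tverts l) then d else c))
    :: ka r ((if odd (tverts l) then alt lmul c d else alt lmul d c)
               (fun i => z ((tverts l).+1 + i)%N) (tverts r)).
Proof.
have lt_l := tverts_node_left l r.
rewrite kargs_node drop_alt /= subSS addKn if_neg.
by rewrite alt_mkseq (take_mkseq _ (ltnW lt_l)) nth_mkseq.
Qed.

Lemma cargs_node_mkseq (f g : seq B -> B) l r z :
  cargs f g (Node l r) (mkseq z (tverts (Node l r)))
  = cup g f l (mkseq z (tverts l)) * z (tverts l)
    :: cargs f g r (mkseq (fun i => z ((tverts l).+1 + i)%N) (tverts r)).
Proof.
have lt_l := tverts_node_left l r.
rewrite [LHS]/cargs -/cargs (take_mkseq _ (ltnW lt_l)) nth_mkseq //.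
by rewrite drop_mkseq subSS addKn.
Qed.

Lemma kappa_tree_cup (f : seq B -> B) c t s u :
  ka t s = map (fun x => lmul x c) (cargs f (k c) t u) ->
  kt t s = cup f (k c) t u.
Proof. by case: t => [|l r] //= ->. Qed.

Lemma kargs_alt t c d z :
  (is_be t -> ka t (alt lmul c d z (tverts t))
     = map (fun x => lmul x d) (cargs (k c) (k d) t (mkseq z (tverts t)))) /\
  (is_bo t -> ka t (alt lmul c d z (tverts t))
     = map (fun x => lmul x c) (cargs (k d) (k c) t (mkseq z (tverts t)))).
Proof.
elim: t c d z => [|l IHl r IHr] c d z; first by [].
split=> [/andP[l_bo r_be] | /andP[l_be r_be]];
  rewrite kargs_node_alt cargs_node_mkseq /=.
- rewrite ((tverts_parity l).2 l_bo) (kappa_tree_cup ((IHl c d z).2 l_bo)).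
  by rewrite ((IHr c d _).1 r_be) lmul_assoc.
- rewrite (negbTE ((tverts_parity l).1 l_be)).
  rewrite (kappa_tree_cup ((IHl c d z).1 l_be)).
  by rewrite ((IHr d c _).1 r_be) lmul_assoc.
Qed.

End AlternatingArguments.

Theorem lemma4 (K : fieldType) (B A : algType K)
  (lmul : B -> A -> A) (rmul : A -> B -> A) (E : A -> B)
  (kappa : seq A -> B) (a b : A) :
  [pchar K] =i pred0 ->
  BProbSpace lmul rmul E ->
  Bfree lmul rmul E a b ->
  cumulants lmul kappa E ->
  forall (n : nat) (z : nat -> B),
    (forall tau : tree, is_be tau -> tverts tau = n.*2 ->
       kappa_tree lmul kappa tau (alt lmul a b z n.*2)
       = cup (kc lmul kappa a) (kc lmul kappa b) tau (mkseq z n.*2)) /\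
    (forall sigma : tree, is_bo sigma -> tverts sigma = n.*2.+1 ->
       kappa_tree lmul kappa sigma (alt lmul a b z n.*2.+1)
       = cup (kc lmul kappa b) (kc lmul kappa a) sigma (mkseq z n.*2.+1)).
Proof.
move=> _ probA _ _ n z.
have lmul_assoc := lmulA probA.
split=> t t_sort <-; apply: kappa_tree_cup.
- exact: (kargs_alt kappa lmul_assoc t a b z).1 t_sort.
- exact: (kargs_alt kappa lmul_assoc t a b z).2 t_sort.
Qed.
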